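(* Let $n \geq 3$, let $\Omega = \bigcap_{m=0}^q \{u_m \leq 0\} \subset \mathbb{R}^n$ be a compact convex polytope with non-empty interior, and let $g$ be a Riemannian metric on $\mathbb{R}^n$, all satisfying the standing assumptions described in the context. Then for every $\varepsilon \in (0,1)$ there exists $\delta > 0$ with the following property: if $0 \leq j < k \leq q$ and $x \in \Omega$ satisfies $-\delta \leq u_j(x) \leq 0$ and $-\delta \leq u_k(x) \leq 0$, then $\langle \nu_j, \nu_k \rangle - \varepsilon \leq \langle N_j, N_k \rangle$ at $x$.
   Context: $u_0,\dots,u_q$ are non-constant linear (affine) functions on $\mathbb{R}^n$, $\Omega=\bigcap_{m=0}^q\{u_m\le0\}$ compact convex with non-empty interior. Standing assumptions: (a) for each $k$, $\{u_k>0\}\cap\bigcap_{m\neq k}\{u_m\le0\}\neq\emptyset$; (b) the Euclidean gradient of each $u_k$ is a unit vector $N_k\in S^{n-1}$; (c) for $j<k$, if some $x\in\Omega$ has $u_j(x)=u_k(x)=0$ then $\langle N_j,N_k\rangle\le0$ (Euclidean); (d) $\nu_k=\nabla u_k/|\nabla u_k|$ is the unit normal to level sets of $u_k$ computed with respect to $g$, and for $j<k$, if $x\in\Omega$ with $u_j(x)=u_k(x)=0$, then $\langle\nu_j,\nu_k\rangle\le\langle N_j,N_k\rangle$ at $x$, where $\langle\nu_j,\nu_k\rangle$ is the $g$-inner product and $\langle N_j,N_k\rangle$ the Euclidean one. *)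

From HB Require Import structures.
From mathcomp Require Import all_boot all_order all_algebra.
From mathcomp Require Import all_classical all_reals all_analysis.
Set Implicit Arguments. Unset Strict Implicit. Unset Printing Implicit Defensive.
Import Order.TTheory GRing.Theory Num.Theory.
Import numFieldNormedType.Exports.
Local Open Scope classical_set_scope.
Local Open Scope ring_scope.

Definition edot (R : realType) (n : nat) (a b : 'rV[R]_n) : R :=
  (a *m b^T) 0 0.

Fixpoint Ck (R : realType) (n : nat) (k : nat) (f : 'rV[R]_n -> R^o) : Prop :=
  match k with
  | 0%N => continuous f
  | k'.+1 => (forall x, differentiable f x) /\
             (forall v : 'rV[R]_n, Ck k' (fun x => 'D_v f x))
  end.

Definition smooth_fun (R : realType) (n : nat) (f : 'rV[R]_n -> R^o) : Prop :=
  forall k, Ck k f.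

(* A Riemannian metric on R^n: a smooth field of symmetric positive definite
   matrices g(x), with g(x)_{ij} = g_x(e_i, e_j). *)
Definition riemannian_metric (R : realType) (n : nat) (g : 'rV[R]_n -> 'M[R]_n) : Prop :=
  (forall i j, smooth_fun (fun x => g x i j)) /\
  (forall x, (g x)^T = g x) /\
  (forall x (v : 'rV[R]_n), v != 0 -> 0 < (v *m g x *m v^T) 0 0).

Definition ginner (R : realType) (n : nat) (G : 'M[R]_n) (v w : 'rV[R]_n) : R :=
  (v *m G *m w^T) 0 0.

(* g-gradient of an affine function whose Euclidean gradient (differential)
   is the row vector a: grad_g u = G^{-1} a (written as a row vector). *)
Definition ggrad (R : realType) (n : nat) (G : 'M[R]_n) (a : 'rV[R]_n) : 'rV[R]_n :=
  a *m (invmx G)^T.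

Definition gnormal (R : realType) (n : nat) (G : 'M[R]_n) (a : 'rV[R]_n) : 'rV[R]_n :=
  (Num.sqrt (ginner G (ggrad G a) (ggrad G a)))^-1 *: ggrad G a.

(* For a pair j < k, phi = -u_j - u_k and F = <nu_j, nu_k>_g are continuous on
   the compact polytope Omega, phi >= 0 there, and phi vanishes exactly on the
   face {u_j = u_k = 0}, where F <= <N_j, N_k> by (d).  Hence
   max(phi, <N_j, N_k> + eps - F) has a positive minimum on Omega, and a quarter
   of it is a delta for this pair; there are finitely many pairs. *)
From HB Require Import structures.
From mathcomp Require Import all_boot all_order all_algebra.
From mathcomp Require Import all_classical all_reals all_analysis.
From mathcomp Require Import perm lra.
Import Order.TTheory GRing.Theory Num.Theory.
Import numFieldNormedType.Exports.
Set Implicit Arguments. Unset Strict Implicit. Unset Printing Implicit Defensive.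
Local Open Scope classical_set_scope.
Local Open Scope ring_scope.

Section EntrywiseContinuity.
Variables (R : numFieldType) (T : topologicalType).

Definition continuous_mx m p (M : T -> 'M[R]_(m, p)) :=
  forall i j, continuous (fun x => M x i j).

Lemma continuous_mx_cst m p (A : 'M[R]_(m, p)) : continuous_mx (fun _ => A).
Proof. by move=> i j; exact: cst_continuous. Qed.

Lemma continuous_mx_mul m p r (A : T -> 'M[R]_(m, p)) (B : T -> 'M[R]_(p, r)) :
  continuous_mx A -> continuous_mx B -> continuous_mx (fun x => A x *m B x).
Proof.
move=> cA cB i j; under eq_fun => x do rewrite mxE.
apply: (@continuous_big R _ +%R 0 xpredT add_continuous) => k _ x.
by apply: continuousM; [exact: cA | exact: cB].
Qed.

Lemma continuous_mx_tr m p (A : T -> 'M[R]_(m, p)) :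
  continuous_mx A -> continuous_mx (fun x => (A x)^T).
Proof. by move=> cA i j; under eq_fun => x do rewrite mxE; exact: cA. Qed.

Lemma continuous_mx_scale m p (s : T -> R) (A : T -> 'M[R]_(m, p)) :
  continuous s -> continuous_mx A -> continuous_mx (fun x => s x *: A x).
Proof.
move=> cs cA i j; under eq_fun => x do rewrite mxE.
by move=> x; apply: continuousM; [exact: cs | exact: cA].
Qed.

Lemma continuous_det m (A : T -> 'M[R]_m) :
  continuous_mx A -> continuous (fun x => \det (A x)).
Proof.
move=> cA; apply: (@continuous_big R _ +%R 0 xpredT add_continuous) => s _ x.
apply: (@continuousM R T (fun=> (-1) ^+ s) (fun y => \prod_i A y i (s i))).
  exact: cst_continuous.
by apply: (@continuous_big R _ *%R 1 xpredT mul_continuous) => i _; exact: cA.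
Qed.

Lemma continuous_mx_adj m (A : T -> 'M[R]_m) :
  continuous_mx A -> continuous_mx (fun x => \adj (A x)).
Proof.
move=> cA i j; under eq_fun => x do rewrite mxE /cofactor.
move=> x; apply: (@continuousM R T (fun=> (-1) ^+ (j + i))
                                 (fun y => \det (row' j (col' i (A y))))).
  exact: cst_continuous.
by apply: continuous_det => a b; under eq_fun => y do rewrite !mxE; exact: cA.
Qed.

Lemma continuous_mx_invmx m (A : T -> 'M[R]_m) :
  continuous_mx A -> (forall x, A x \in unitmx) ->
  continuous_mx (fun x => invmx (A x)).
Proof.
move=> cA uA i j.
have detA x : \det (A x) != 0 by rewrite -unitfE -unitmxE.
under eq_fun => x do rewrite /invmx uA mxE.
move=> x; apply: (@continuousM R T (fun y => (\det (A y))^-1)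
                                 (fun y => \adj (A y) i j)).
  by apply: (@continuousV R T (fun y => \det (A y)) x (detA x)); exact: continuous_det.
exact: continuous_mx_adj.
Qed.

End EntrywiseContinuity.

Section PositiveDefinite.
Variables (R : realType) (n : nat).

Definition posdefmx (G : 'M[R]_n) := forall v, v != 0 -> 0 < ginner G v v.

Lemma posdefmx_unit (G : 'M[R]_n) : posdefmx G -> G \in unitmx.
Proof.
move=> pd; rewrite -row_free_unit; apply/negPn/negP => notfree.
have ker_neq0 : kermx G != 0.
  rewrite -mxrank_eq0 mxrank_ker subn_eq0.
  by move: notfree; rewrite /row_free eqn_leq rank_leq_row.
set v := nz_row (kermx G).
have vG : v *m G = 0 by apply/eqP; rewrite -sub_kermx nz_row_sub.
by move: (pd v); rewrite nz_row_eq0 /ginner vG mul0mx mxE ltxx => /(_ ker_neq0).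
Qed.

Lemma ggrad_neq0 (G : 'M[R]_n) (a : 'rV[R]_n) :
  G \in unitmx -> a != 0 -> ggrad G a != 0.
Proof.
move=> uG; apply: contra => /eqP ga0.
have <- : ggrad G a *m G^T = a.
  by rewrite /ggrad -mulmxA -trmx_mul mulmxV // trmx1 mulmx1.
by rewrite ga0 mul0mx.
Qed.

Lemma unit_edot_neq0 (a : 'rV[R]_n) : edot a a = 1 -> a != 0.
Proof.
move=> aa1; apply/eqP => a0.
by move: aa1; rewrite a0 /edot mul0mx mxE => /esym/eqP; rewrite oner_eq0.
Qed.

Lemma continuous_edot (a : 'rV[R]_n) : continuous (edot a).
Proof.
have cid : continuous_mx (@id 'rV[R]_n) by move=> i j; exact: coord_continuous.
have := continuous_mx_mul (continuous_mx_cst (A := a)) (continuous_mx_tr cid).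
by move=> /(_ 0 0).
Qed.

Lemma continuous_ginner_gnormal (T : topologicalType) (g : T -> 'M[R]_n)
    (a b : 'rV[R]_n) :
  continuous_mx g -> (forall x, posdefmx (g x)) -> a != 0 -> b != 0 ->
  continuous (fun x => ginner (g x) (gnormal (g x) a) (gnormal (g x) b)).
Proof.
move=> cg pd a0 b0.
have ug x : g x \in unitmx by exact: posdefmx_unit.
have cgrad w : continuous_mx (fun x => ggrad (g x) w).
  exact: continuous_mx_mul (continuous_mx_cst (A := w))
                           (continuous_mx_tr (continuous_mx_invmx cg ug)).
have cnormal w : w != 0 -> continuous_mx (fun x => gnormal (g x) w).
  move=> w0; apply: continuous_mx_scale (cgrad w) => x.
  pose sqnorm y := ginner (g y) (ggrad (g y) w) (ggrad (g y) w).
  have sqnorm_gt0 : 0 < sqnorm x by apply: pd; exact: ggrad_neq0.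
  apply: (@continuousV R T (fun y => Num.sqrt (sqnorm y))).
    by rewrite sqrtr_eq0 -ltNge.
  apply: (@continuous_comp _ _ _ sqnorm); last exact: sqrt_continuous.
  have := continuous_mx_mul (continuous_mx_mul (cgrad w) cg)
                            (continuous_mx_tr (cgrad w)).
  by move=> /(_ 0 0 x).
by move: (continuous_mx_mul (continuous_mx_mul (cnormal a a0) cg)
                           (continuous_mx_tr (cnormal b b0))) => /(_ 0 0).
Qed.

End PositiveDefinite.

Lemma compact_le_near_zeros (R : realType) (T : topologicalType) (K : set T)
    (phi F : T -> R) (b : R) :
  compact K -> continuous phi -> continuous F ->
  (forall x, K x -> 0 <= phi x) -> (forall x, K x -> phi x = 0 -> F x <= b) ->
  forall eps, 0 < eps ->
  exists2 delta, 0 < delta & forall x, K x -> phi x <= delta -> F x <= b + eps.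
Proof.
move=> cK cphi cF phi_ge0 F_le_b eps eps0.
have [->|/set0P K0] := eqVneq K set0; first by exists 1.
pose psi := phi \max (fun x => b + eps - F x).
have cpsi : continuous psi.
  apply: max_fun_continuous cphi _ => x.
  by apply: continuousB (cF x); exact: cst_continuous.
have [z /set_mem Kz psi_min] := compact_EVT_min K0 cK (continuous_subspaceT cpsi).
have psi_z_gt0 : 0 < psi z.
  rewrite /psi /= lt_max; have [phi_z_gt0 //|phi_z_le0] := ltrP 0 (phi z).
  have := F_le_b z Kz; have := phi_ge0 z Kz; lra.
exists (psi z / 2) => [|x Kx phix]; first lra.
by have := psi_min x (mem_set Kx); rewrite [psi x]/psi /= le_max => /orP[]; lra.
Qed.

Lemma compact_le_near_face (R : realType) (T : topologicalType) (K : set T)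
    (v w F : T -> R) (b : R) :
  compact K -> continuous v -> continuous w -> continuous F ->
  (forall x, K x -> v x <= 0 /\ w x <= 0) ->
  (forall x, K x -> v x = 0 -> w x = 0 -> F x <= b) ->
  forall eps, 0 < eps -> exists2 delta, 0 < delta &
    forall x, K x -> - delta <= v x -> - delta <= w x -> F x <= b + eps.
Proof.
move=> cK cv cw cF vw_le0 F_le_b eps eps0.
have [|||delta delta0 hdelta] :=
  compact_le_near_zeros (phi := fun x => - v x - w x) (b := b) cK _ cF _ _ eps0.
- move=> x; apply: (@continuousB _ _ _ (fun y => - v y) w); last exact: cw.
  by apply: (@continuousN _ _ _ v); exact: cv.
- by move=> x /vw_le0; lra.
- by move=> x Kx phi0; have [vx wx] := vw_le0 x Kx; apply: F_le_b => //; lra.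
exists (delta / 2) => [|x Kx vx wx]; first lra.
by apply: hdelta => //; lra.
Qed.

Lemma exists_pos_forall_fin (R : realDomainType) (I : finType) (P : I -> R -> Prop) :
  (forall i d d', 0 < d' <= d -> P i d -> P i d') ->
  (forall i, exists2 d, 0 < d & P i d) ->
  exists2 d, 0 < d & forall i, P i d.
Proof.
move=> P_antitone hP.
have /choice[d hd] : forall i, exists d, 0 < d /\ P i d.
  by move=> i; have [d d_gt0 Pd] := hP i; exists d.
have dmin_gt0 : 0 < \big[Order.min/1]_i d i.
  by apply: lt_bigmin => // i _; case: (hd i).
exists (\big[Order.min/1]_i d i) => // i.
by apply: P_antitone (proj2 (hd i)); rewrite dmin_gt0 bigmin_le.
Qed.

Theorem lemma4p2 (R : realType) (n q : nat)
  (u : 'I_q.+1 -> 'rV[R]_n -> R) (N : 'I_q.+1 -> 'rV[R]_n) (c : 'I_q.+1 -> R)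
  (g : 'rV[R]_n -> 'M[R]_n) :
  (3 <= n)%N ->
  (* u_m affine with Euclidean gradient N_m, a unit vector (assumption (b)) *)
  (forall m x, u m x = edot (N m) x + c m) ->
  (forall m, edot (N m) (N m) = 1) ->
  let Omega := [set x | forall m, u m x <= 0] in
  compact Omega -> convex_set Omega -> (exists x, (Omega)° x) ->
  riemannian_metric g ->
  (* (a) *)
  (forall k, exists x, 0 < u k x /\ forall m, m != k -> u m x <= 0) ->
  (* (c) *)
  (forall j k : 'I_q.+1, (j < k)%N ->
     (exists x, Omega x /\ u j x = 0 /\ u k x = 0) -> edot (N j) (N k) <= 0) ->
  (* (d) *)
  (forall j k : 'I_q.+1, (j < k)%N -> forall x, Omega x -> u j x = 0 -> u k x = 0 ->
     ginner (g x) (gnormal (g x) (N j)) (gnormal (g x) (N k)) <= edot (N j) (N k)) ->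
  forall eps : R, 0 < eps < 1 ->
  exists delta : R, 0 < delta /\
    forall j k : 'I_q.+1, (j < k)%N -> forall x, Omega x ->
      - delta <= u j x <= 0 -> - delta <= u k x <= 0 ->
      ginner (g x) (gnormal (g x) (N j)) (gnormal (g x) (N k)) - eps <= edot (N j) (N k).
Proof.
move=> _ uE Nunit Omega cOmega _ _ [g_smooth [_ g_posdef]] _ _ hd eps /andP[eps0 _].
have cg : continuous_mx g by move=> i j; exact: (g_smooth i j 0%N).
have cu m : continuous (u m).
  rewrite (funext (uE m)) => x.
  apply: (@continuousD _ _ _ (edot (N m)) (fun=> c m)); first exact: continuous_edot.
  exact: cst_continuous.
pose close_pair (p : 'I_q.+1 * 'I_q.+1) delta := (p.1 < p.2)%N ->
  forall x, Omega x -> - delta <= u p.1 x <= 0 -> - delta <= u p.2 x <= 0 ->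
  ginner (g x) (gnormal (g x) (N p.1)) (gnormal (g x) (N p.2)) - eps
    <= edot (N p.1) (N p.2).
have [|[j k]|delta delta0 hdelta] := @exists_pos_forall_fin _ _ close_pair.
- move=> p d d' /andP[_ d'_le_d] hp jk x Ox /andP[ujx ?] /andP[ukx ?].
  by apply: hp => //; apply/andP; split; lra.
- have [jk|] := ltnP j k; last by exists 1 => //; rewrite /close_pair leqNgt => /negP.
  have [|||delta delta0 hdelta] := compact_le_near_face cOmega (cu j) (cu k)
    (F := fun x => ginner (g x) (gnormal (g x) (N j)) (gnormal (g x) (N k)))
    (b := edot (N j) (N k)) _ _ _ eps0.
  + by apply: continuous_ginner_gnormal; rewrite // unit_edot_neq0.
  + by move=> x Ox; split; apply: Ox.
  + exact: hd.
  exists delta => // _ x Ox /andP[? _] /andP[? _].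
  by have := hdelta x Ox; lra.
- by exists delta; split => // j k; exact: (hdelta (j, k)).
Qed.
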